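(* If a mechanism $\varphi$ is separation monotonic, separation upper invariant, and separation lower invariant, then it is $L$-separation strategyproof for any $L\ge 2$.
   Context: Let $M$ be a finite set of alternatives. A preference order is a weak order $R$ on $M$ (strict part $P$), represented as $M_1 ~P~ \ldots ~P~ M_K$ with $(M_k)$ a partition of $M$ into indifference classes, each class strictly preferred to the next. A mechanism is a map $\varphi$ from preference orders to lotteries over $M$; $\varphi_A(R)=\sum_{a\in A}\varphi_a(R)$. A lottery $x$ first order-stochastically dominates $y$ at $R$ if $\sum_{j: j R a} x_j \ge \sum_{j: j R a} y_j$ for all $a\in M$. A separation is a pair $(R,R')$ such that for some $\kappa$, $R'$ is obtained from $R=M_1 P\ldots P M_K$ by replacing the class $M_\kappa$ with $M^1_\kappa P' M^2_\kappa$, where $M^1_\kappa\dot\cup M^2_\kappa=M_\kappa$, leaving all other classes and their order unchanged. $\varphi$ is separation responsive if for all separations $\varphi_{M^1_\kappa}(R')\ge\varphi_{M^1_\kappa}(R)$ and $\varphi_{M^2_\kappa}(R')\le\varphi_{M^2_\kappa}(R)$; separation direct if for all separations with $\varphi_{M_k}(R)\ne\varphi_{M_k}(R')$ for some $k$, both $\varphi_{M^1_\kappa}(R')\ne\varphi_{M^1_\kappa}(R)$ and $\varphi_{M^2_\kappa}(R')\ne\varphi_{M^2_\kappa}(R)$; separation monotonic if both; separation upper (resp. lower) invariant if for all separations $\varphi_{M_k}(R)=\varphi_{M_k}(R')$ for all $k<\kappa$ (resp. all $k>\kappa$). An $L$-separation ($L\ge 2$) is a pair $(R,R')$ such that for some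 $\kappa$, $R'$ is obtained from $R$ by replacing the class $M_\kappa$ with $M^1_\kappa P' \ldots P' M^L_\kappa$, where $M_\kappa=\bigcup_{l=1}^L M^l_\kappa$ is a partition into pairwise disjoint sets, all other classes and their order unchanged. $\varphi$ is $L$-separation strategyproof if for every $L$-separation $(R,R')$: $\varphi(R)$ first order-stochastically dominates $\varphi(R')$ at $R$, and $\varphi(R')$ first order-stochastically dominates $\varphi(R)$ at $R'$. *)

From mathcomp Require Import all_boot all_order all_algebra.
Set Implicit Arguments. Unset Strict Implicit. Unset Printing Implicit Defensive.
Import Order.TTheory GRing.Theory Num.Theory.
Local Open Scope ring_scope.

Section Defs.
Variables (F : realFieldType) (M : finType).

(* A preference order (weak order) R = M_1 P ... P M_K is represented by the
   ordered list [:: M_1; ...; M_K] of its indifference classes: nonempty,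
   pairwise disjoint, covering M. *)
Definition pref_order (s : seq {set M}) : Prop :=
  [/\ forall i, (i < size s)%N -> nth set0 s i != set0,
      forall i j, (i < j < size s)%N -> [disjoint nth set0 s i & nth set0 s j]
    & \bigcup_(A <- s) A = [set: M]].

Definition cls (s : seq {set M}) (x : M) : nat := find (fun A : {set M} => x \in A) s.

Definition weakly_prefers (s : seq {set M}) (j a : M) : bool := (cls s j <= cls s a)%N.

Definition lottery (x : {ffun M -> F}) : Prop :=
  (forall a, 0 <= x a) /\ \sum_(a : M) x a = 1.

Definition mechanism (phi : seq {set M} -> {ffun M -> F}) : Prop :=
  forall s, pref_order s -> lottery (phi s).

Definition mass (x : {ffun M -> F}) (A : {set M}) : F := \sum_(a in A) x a.

Definition fosd (s : seq {set M}) (x y : {ffun M -> F}) : Prop :=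
  forall a : M, \sum_(j | weakly_prefers s j a) y j <= \sum_(j | weakly_prefers s j a) x j.

Definition separation (R R' : seq {set M}) (k : nat) (M1 M2 : {set M}) : Prop :=
  [/\ pref_order R, pref_order R', (k < size R)%N,
      [disjoint M1 & M2] /\ M1 :|: M2 = nth set0 R k
    & R' = take k R ++ M1 :: M2 :: drop k.+1 R].

Definition Lseparation (L : nat) (R R' : seq {set M}) (k : nat) (S : seq {set M}) : Prop :=
  [/\ pref_order R, pref_order R', (k < size R)%N, size S = L
    & [/\ forall i j, (i < j < size S)%N -> [disjoint nth set0 S i & nth set0 S j],
      \bigcup_(A <- S) A = nth set0 R k
    & R' = take k R ++ S ++ drop k.+1 R]].

Variable phi : seq {set M} -> {ffun M -> F}.

Definition separation_responsive : Prop :=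
  forall R R' k M1 M2, separation R R' k M1 M2 ->
    mass (phi R) M1 <= mass (phi R') M1 /\ mass (phi R') M2 <= mass (phi R) M2.

Definition separation_direct : Prop :=
  forall R R' k M1 M2, separation R R' k M1 M2 ->
    (exists2 l, (l < size R)%N & mass (phi R) (nth set0 R l) != mass (phi R') (nth set0 R l)) ->
    mass (phi R') M1 != mass (phi R) M1 /\ mass (phi R') M2 != mass (phi R) M2.

Definition separation_monotonic : Prop :=
  separation_responsive /\ separation_direct.

Definition separation_upper_invariant : Prop :=
  forall R R' k M1 M2, separation R R' k M1 M2 ->
    forall l, (l < k)%N -> mass (phi R) (nth set0 R l) = mass (phi R') (nth set0 R l).

Definition separation_lower_invariant : Prop :=
  forall R R' k M1 M2, separation R R' k M1 M2 ->
    forall l, (k < l < size R)%N -> mass (phi R) (nth set0 R l) = mass (phi R') (nth set0 R l).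

Definition Lseparation_strategyproof (L : nat) : Prop :=
  forall R R' k S, Lseparation L R R' k S ->
    fosd R (phi R) (phi R') /\ fosd R' (phi R') (phi R).

End Defs.

From mathcomp Require Import all_boot all_order all_algebra.
From mathcomp Require Import lra.
Set Implicit Arguments. Unset Strict Implicit. Unset Printing Implicit Defensive.
Import Order.TTheory GRing.Theory Num.Theory.
Local Open Scope ring_scope.

(* Write R = s ++ X :: t and R' = s ++ S ++ t, where the classes of S partition X.
   Splitting off the blocks of S one at a time is a chain of separations, so upper
   and lower invariance show that every class of R other than X keeps its
   probability in R'; since both lotteries sum to 1, so does X.  Hence every upper
   contour set of R has the same probability under phi R and phi R'.  An upper
   contour set of R' is the union of prefixes of s, S and t; only the prefix S1 of
   S = S1 ++ S2 needs attention, and responsiveness for the separation of X into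
   (seq_cover S1) P' (seq_cover S2) shows that its probability can only grow. *)

Section Partitions.
Variable M : finType.
Implicit Types (A B C X Y Z : {set M}) (s t S : seq {set M}).

Definition seq_cover s : {set M} := \bigcup_(C <- s) C.

Local Notation trivIseq := (pairwise (fun C D : {set M} => [disjoint C & D])).

Lemma seq_cover_cons C s : seq_cover (C :: s) = C :|: seq_cover s.
Proof. exact: big_cons. Qed.

Lemma seq_cover_cat s t : seq_cover (s ++ t) = seq_cover s :|: seq_cover t.
Proof. exact: big_cat. Qed.

Lemma mem_seq_cover s x : (x \in seq_cover s) = has (fun C : {set M} => x \in C) s.
Proof.
elim: s => [|C s IHs]; first by rewrite /seq_cover big_nil inE.
by rewrite seq_cover_cons inE IHs.
Qed.

Lemma disjoint_seq_cover C s :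
  [disjoint C & seq_cover s] = all (fun D : {set M} => [disjoint C & D]) s.
Proof.
rewrite /seq_cover bigcup_seq.
by apply/bigcup_disjointP/allP => disjC D D_in; apply: disjC.
Qed.

Lemma disjoint_seq_cover_l s C :
  [disjoint seq_cover s & C] = all (fun D : {set M} => [disjoint D & C]) s.
Proof.
by rewrite disjoint_sym disjoint_seq_cover; apply: eq_all => D; rewrite disjoint_sym.
Qed.

Lemma pref_orderP s :
  pref_order s <-> [/\ set0 \notin s, trivIseq s & seq_cover s = setT].
Proof.
split.
- case=> ne disj cov; split => //.
  + by apply/negP => /(nthP set0)[i lt_i /eqP]; apply/negP/ne.
  + by apply/(pairwiseP set0) => i j lt_i lt_j lt_ij; apply: disj; rewrite lt_ij.
- case=> ne /(pairwiseP set0) disj cov; split => //.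
  + by move=> i lt_i; apply: contraNneq ne => <-; apply: mem_nth.
  + by move=> i j /andP[lt_ij lt_j]; apply: disj => //; apply: ltn_trans lt_j.
Qed.

Lemma pref_order_merge s S t :
  pref_order (s ++ S ++ t) -> S != [::] -> pref_order (s ++ seq_cover S :: t).
Proof.
case/pref_orderP=> ne disj cov nilS; apply/pref_orderP; split.
- move: ne; rewrite !mem_cat in_cons !negb_or => /and3P[-> neS ->].
  rewrite andbT eq_sym; case: S {disj cov} nilS neS => // D S _.
  by rewrite in_cons negb_or seq_cover_cons setU_eq0 eq_sym => /andP[/negbTE->].
- move: disj; rewrite !pairwise_cat pairwise_cons allrel_consr allrel_catr.
  case/and5P=> /andP[disj_sS disj_st] -> disj_St _ ->; rewrite !andbT /=.
  rewrite disj_st andbT; apply/andP; split; apply/allP => C C_in.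
  + by rewrite disjoint_seq_cover; apply/allP => D D_in; move/allrelP: disj_sS; apply.
  + by rewrite disjoint_seq_cover_l; apply/allP => D D_in; move/allrelP: disj_St; apply.
- by rewrite -cov !seq_cover_cat seq_cover_cons.
Qed.

Lemma separation_cat s t X Y Z :
  pref_order (s ++ X :: t) -> pref_order (s ++ Y :: Z :: t) -> Y :|: Z = X ->
  separation (s ++ X :: t) (s ++ Y :: Z :: t) (size s) Y Z.
Proof.
move=> prefR prefR' covX; split => //.
- by rewrite size_cat /= addnS ltnS leq_addr.
- split; last by rewrite nth_cat ltnn subnn.
  case/pref_orderP: prefR' => _ + _.
  by rewrite pairwise_cat /= => /and5P[_ _ /andP[]].
- rewrite (take_size_cat _ (erefl (size s))) -add1n -drop_drop.
  by rewrite (drop_size_cat _ (erefl (size s))) drop1.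
Qed.

Section Mass.
Variable F : realFieldType.
Implicit Types x y : {ffun M -> F}.

Lemma mass_setU x A B : [disjoint A & B] -> mass x (A :|: B) = mass x A + mass x B.
Proof. by move=> disjAB; rewrite /mass -bigU //; apply: eq_bigl => a; rewrite !inE. Qed.

Lemma mass_seq_cover x s : trivIseq s -> mass x (seq_cover s) = \sum_(C <- s) mass x C.
Proof.
elim: s => [|C s IHs]; first by rewrite /mass /seq_cover !big_nil big_set0.
rewrite pairwise_cons => /andP[disjC /IHs mass_s].
by rewrite seq_cover_cons big_cons mass_setU ?mass_s // disjoint_seq_cover.
Qed.

Lemma mass_seq_cover_subseq x S s :
  subseq S s -> pref_order s -> mass x (seq_cover S) = \sum_(C <- S) mass x C.
Proof.
move=> subS /pref_orderP[_ disj _]; apply: mass_seq_cover.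
exact: subseq_pairwise disj.
Qed.

Lemma sum_mass_pref_order x s : lottery x -> pref_order s -> \sum_(C <- s) mass x C = 1.
Proof.
move=> [_ sum1] prefs; rewrite -(mass_seq_cover_subseq _ (subseq_refl s) prefs).
by case/pref_orderP: prefs => _ _ ->; rewrite -sum1; apply: eq_bigl => a; rewrite inE.
Qed.

Lemma fosd_prefix_sums s x y : pref_order s ->
  (forall n, \sum_(C <- take n s) mass y C <= \sum_(C <- take n s) mass x C) ->
  fosd s x y.
Proof.
move=> prefs le_prefix a.
have upper_set (z : {ffun M -> F}) : \sum_(j | weakly_prefers s j a) z j
    = mass z (seq_cover (take (cls s a).+1 s)).
  apply: eq_bigl => j; rewrite mem_seq_cover has_take // -mem_seq_cover.
  by case/pref_orderP: prefs => _ _ ->; rewrite inE.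
by rewrite !upper_set !(mass_seq_cover_subseq _ (take_subseq _ _) prefs).
Qed.

End Mass.

End Partitions.

Lemma take_catE (T : Type) n (s1 s2 : seq T) :
  take n (s1 ++ s2) = take n s1 ++ take (n - size s1) s2.
Proof.
rewrite take_cat; case: ltnP => [lt_n | le_n]; last by rewrite (take_oversize le_n).
by move/ltnW: lt_n; rewrite -subn_eq0 => /eqP->; rewrite take0 cats0.
Qed.

Section Refinement.
Variables (F : realFieldType) (M : finType) (phi : seq {set M} -> {ffun M -> F}).
Hypotheses (phi_lottery : mechanism phi) (phi_responsive : separation_responsive phi).
Hypotheses (phi_upper : separation_upper_invariant phi)
           (phi_lower : separation_lower_invariant phi).
Implicit Types (s t S : seq {set M}) (C X Y Z : {set M}).

Lemma mass_separation_outside s t X Y Z :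
  separation (s ++ X :: t) (s ++ Y :: Z :: t) (size s) Y Z ->
  {in s ++ t, forall C, mass (phi (s ++ Y :: Z :: t)) C = mass (phi (s ++ X :: t)) C}.
Proof.
move=> sep C; rewrite mem_cat => /orP[C_s | C_t]; apply/esym.
- have := phi_upper sep (l := index C s).
  by rewrite index_mem C_s nth_cat index_mem C_s nth_index //; apply.
- have := phi_lower sep (l := (size s + (index C t).+1)%N).
  rewrite nth_cat [(_ < size s)%N]ltnNge leq_addr addKn /= nth_index //.
  rewrite size_cat /= ltn_add2l ltnS index_mem C_t -[X in (X < _)%N]addn0 ltn_add2l.
  by apply.
Qed.

Lemma mass_refine_outside s t S X :
  pref_order (s ++ X :: t) -> pref_order (s ++ S ++ t) -> seq_cover S = X ->
  {in s ++ t, forall C, mass (phi (s ++ S ++ t)) C = mass (phi (s ++ X :: t)) C}.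
Proof.
elim: S s X => [|Y S IHS] s X prefR prefR' covS.
  case/pref_orderP: prefR => + _ _.
  by rewrite -covS /seq_cover big_nil mem_cat mem_head orbT.
rewrite seq_cover_cons in covS.
have [S0 | nilS] := eqVneq S [::].
  by move: covS; rewrite S0 /seq_cover big_nil setU0 => -> C.
have prefR1 : pref_order ((s ++ [:: Y]) ++ seq_cover S :: t).
  by apply: pref_order_merge; rewrite // -catA.
have := IHS _ _ prefR1; rewrite -!catA /= in prefR1 * => /(_ prefR' erefl) IH.
have sep := separation_cat prefR prefR1 covS.
move=> C C_st; rewrite IH; first exact: mass_separation_outside.
by rewrite mem_cat in_cons orbCA -mem_cat C_st orbT.
Qed.

Lemma sum_mass_refine_class s t S X :
  pref_order (s ++ X :: t) -> pref_order (s ++ S ++ t) -> seq_cover S = X ->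
  \sum_(C <- S) mass (phi (s ++ S ++ t)) C = mass (phi (s ++ X :: t)) X.
Proof.
move=> prefR prefR' covS.
have outside := mass_refine_outside prefR prefR' covS.
have eq_s : \sum_(C <- s) mass (phi (s ++ S ++ t)) C
          = \sum_(C <- s) mass (phi (s ++ X :: t)) C.
  by apply: eq_big_seq => C C_s; apply: outside; rewrite mem_cat C_s.
have eq_t : \sum_(C <- t) mass (phi (s ++ S ++ t)) C
          = \sum_(C <- t) mass (phi (s ++ X :: t)) C.
  by apply: eq_big_seq => C C_t; apply: outside; rewrite mem_cat C_t orbT.
have := sum_mass_pref_order (phi_lottery prefR) prefR.
have := sum_mass_pref_order (phi_lottery prefR') prefR'.
rewrite !big_cat big_cons /= eq_s eq_t; lra.
Qed.

Lemma mass_refine_classes s t S X :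
  pref_order (s ++ X :: t) -> pref_order (s ++ S ++ t) -> seq_cover S = X ->
  {in s ++ X :: t, forall C, mass (phi (s ++ S ++ t)) C = mass (phi (s ++ X :: t)) C}.
Proof.
move=> prefR prefR' covS C; rewrite mem_cat in_cons orbCA -mem_cat.
case/orP=> [/eqP-> | C_st]; last exact: mass_refine_outside.
rewrite -{1}covS (mass_seq_cover_subseq _ (infixW (infix_infix s S t)) prefR').
exact: sum_mass_refine_class.
Qed.

Lemma sum_mass_refine_prefix_ge s t S1 S2 X :
  pref_order (s ++ X :: t) -> pref_order (s ++ (S1 ++ S2) ++ t) ->
  seq_cover (S1 ++ S2) = X ->
  \sum_(C <- S1) mass (phi (s ++ X :: t)) C
    <= \sum_(C <- S1) mass (phi (s ++ (S1 ++ S2) ++ t)) C.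
Proof.
move=> prefR prefR' covS; rewrite -catA in prefR' *.
have [-> | nilS1] := eqVneq S1 [::]; first by rewrite !big_nil.
have S1_sub : subseq S1 (s ++ S1 ++ S2 ++ t) := infixW (infix_infix _ _ _).
rewrite -(mass_seq_cover_subseq _ S1_sub prefR').
have [S20 | nilS2] := eqVneq S2 [::].
  move: prefR' covS; rewrite S20 cats0 => prefR' covS.
  by rewrite covS (sum_mass_refine_class prefR prefR' covS).
have prefR2 : pref_order (s ++ seq_cover S1 :: S2 ++ t) by apply: pref_order_merge.
have prefR2' : pref_order ((s ++ [:: seq_cover S1]) ++ S2 ++ t) by rewrite -catA.
have prefR1' := pref_order_merge prefR2' nilS2.
have prefR1 := prefR1'; rewrite -catA /= in prefR1.
have sep := separation_cat prefR prefR1 (etrans (esym (seq_cover_cat S1 S2)) covS).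
apply: le_trans (proj1 (phi_responsive sep)) _.
have := mass_refine_outside prefR1' prefR2' erefl; rewrite -!catA /= => <-.
  by rewrite (sum_mass_refine_class prefR2 prefR' erefl).
by rewrite mem_cat mem_head orbT.
Qed.

Lemma fosd_refine_coarse s t S X :
  pref_order (s ++ X :: t) -> pref_order (s ++ S ++ t) -> seq_cover S = X ->
  fosd (s ++ X :: t) (phi (s ++ X :: t)) (phi (s ++ S ++ t)).
Proof.
move=> prefR prefR' covS; apply: fosd_prefix_sums => // n.
have same_mass : {in take n (s ++ X :: t),
    mass (phi (s ++ S ++ t)) =1 mass (phi (s ++ X :: t))}.
  by move=> C /mem_take; apply: mass_refine_classes.
by rewrite (eq_big_seq _ same_mass).
Qed.

Lemma fosd_refine_fine s t S X :
  pref_order (s ++ X :: t) -> pref_order (s ++ S ++ t) -> seq_cover S = X ->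
  fosd (s ++ S ++ t) (phi (s ++ S ++ t)) (phi (s ++ X :: t)).
Proof.
move=> prefR prefR' covS; apply: fosd_prefix_sums => // n.
have outside := mass_refine_outside prefR prefR' covS.
rewrite !take_catE !big_cat /=.
have -> : \sum_(C <- take n s) mass (phi (s ++ X :: t)) C
        = \sum_(C <- take n s) mass (phi (s ++ S ++ t)) C.
  by apply/esym/eq_big_seq => C /mem_take C_s; apply: outside; rewrite mem_cat C_s.
set k := (n - size s)%N; set m := (k - size S)%N.
have -> : \sum_(C <- take m t) mass (phi (s ++ X :: t)) C
        = \sum_(C <- take m t) mass (phi (s ++ S ++ t)) C.
  by apply/esym/eq_big_seq => C /mem_take C_t; apply: outside; rewrite mem_cat C_t orbT.
rewrite lerD2l lerD2r.
have := sum_mass_refine_prefix_ge (S1 := take k S) (S2 := drop k S) prefR.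
by rewrite cat_take_drop; apply.
Qed.

End Refinement.

Theorem lemma5 (F : realFieldType) (M : finType)
  (phi : seq {set M} -> {ffun M -> F}) :
  mechanism phi ->
  separation_monotonic phi ->
  separation_upper_invariant phi ->
  separation_lower_invariant phi ->
  forall L : nat, (2 <= L)%N -> Lseparation_strategyproof phi L.
Proof.
move=> phi_lottery [phi_responsive _] phi_upper phi_lower L _ R R' k S.
case=> prefR prefR' lt_k _ [_ covS eqR']; subst R'.
have splitR : R = take k R ++ nth set0 R k :: drop k.+1 R.
  by rewrite -drop_nth // cat_take_drop.
have prefR_split : pref_order (take k R ++ nth set0 R k :: drop k.+1 R) by rewrite -splitR.
split.
- have := fosd_refine_coarse phi_lottery phi_upper phi_lower prefR_split prefR' covS.
  by rewrite -splitR.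
- have := fosd_refine_fine phi_lottery phi_responsive phi_upper phi_lower
    prefR_split prefR' covS.
  by rewrite -splitR.
Qed.
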